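(* Let $p>155$ be a prime, let $G$ be a cyclic group of order $p$, and let $S$ be an unsplittable minimal zero-sum sequence over $G$ of length $|S|=\frac{p-1}{2}$. Suppose $S=g^{r_1}(t_2g)^{r_2}(t_3g)^{r_3}(t_4g)^{r_4}$ with $g\in G$, nonnegative integers $r_1,\dots,r_4$, and integers $2\le t_2,t_3,t_4\le p-1$, where $r_2+r_3+r_4\le 15$. If $r_i\ge 2$ for some $i\in\{2,3,4\}$, then $t_i\ge\frac{p+3}{2}$.
   Context: A sequence over $G$ is a finite unordered list of elements of $G$ with repetition allowed, written multiplicatively; $h^r$ denotes $r$ copies of $h$ and $tg$ is the $t$-fold multiple of $g$. $|S|$ is the length, $\sigma(S)$ the sum of terms, and $\operatorname{supp}(S)$ the set of distinct elements occurring. $S$ is a minimal zero-sum sequence if $\sigma(S)=0$ and no subsequence $U$ with $1\le|U|<|S|$ has $\sigma(U)=0$. A minimal zero-sum sequence $S$ is unsplittable if there do not exist $h\in\operatorname{supp}(S)$ and $y,z\in G$ with $y+z=h$ such that the sequence obtained from $S$ by replacing one copy of $h$ with the two terms $y,z$ is again a minimal zero-sum sequence. *)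

From mathcomp Require Import all_boot all_algebra.
Set Implicit Arguments. Unset Strict Implicit. Unset Printing Implicit Defensive.
Import GRing.Theory.

(* Sequences over an additive abelian group G (a zmodType) are represented by
   lists [seq G], considered up to permutation (unordered lists).
   Subsequences U of S (sub-multisets) are exactly the lists [mask m S]. *)

Definition sigma (G : zmodType) (S : seq G) : G := (\sum_(x <- S) x)%R.

Definition minimal_zero_sum (G : zmodType) (S : seq G) : Prop :=
  sigma S = 0%R /\
  forall m : bitseq, 1 <= size (mask m S) < size S -> sigma (mask m S) <> 0%R.

Definition unsplittable (G : zmodType) (S : seq G) : Prop :=
  minimal_zero_sum S /\
  ~ (exists h y z : G, [/\ h \in S, (y + z)%R = h &
                          minimal_zero_sum (y :: z :: rem h S)]).

(* Write h = t g; it occurs at least twice in S, while g occurs at least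
   |S| - 15 times.  If t <= v_g(S) + 1, splitting h into g and (t - 1) g keeps
   the sequence minimal: a zero-sum splitting of the new sequence must separate
   the two new terms, and trading (t - 1) g back for t - 1 copies of g then
   yields a proper zero-sum subsequence of S.  If t is larger but 2t < p, then
   h^2 g^(p - 2t) is itself a short proper zero-sum subsequence of S.  The only
   value of t below (p + 3)/2 left is 2t = p + 1, where g = h + h, and splitting
   g into h, h keeps the sequence minimal. *)

From mathcomp Require Import all_boot all_algebra.
From mathcomp Require Import zify.
Import GRing.Theory.

Set Implicit Arguments.
Unset Strict Implicit.
Unset Printing Implicit Defensive.

Section MinimalZeroSum.

Variable G : zmodType.
Implicit Types (S U V W : seq G) (g h x y z : G).

Lemma sigma_perm S U : perm_eq S U -> sigma S = sigma U.
Proof. exact: perm_big. Qed.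

Lemma sigma_cat U V : sigma (U ++ V) = (sigma U + sigma V)%R.
Proof. exact: big_cat. Qed.

Lemma sigma_cons x S : sigma (x :: S) = (x + sigma S)%R.
Proof. exact: big_cons. Qed.

Lemma sigma_nseq n x : sigma (nseq n x) = (x *+ n)%R.
Proof. by rewrite /sigma big_nseq iter_addr addr0. Qed.

Lemma minimal_zero_sum_sub S U :
  minimal_zero_sum S -> (forall x, count_mem x U <= count_mem x S) ->
  0 < size U < size S -> sigma U <> 0%R.
Proof.
case=> _ minS /count_maskP[m _ permU].
by rewrite (perm_size permU) (sigma_perm permU); apply: minS.
Qed.

Lemma minimal_zero_sum_exceeds S W :
  minimal_zero_sum S -> sigma W = 0%R -> 0 < size W < size S ->
  exists x, count_mem x S < count_mem x W.
Proof.
move=> minS sumW sizeW.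
have [/allP leW | /allPn[x _]] := boolP (all (fun x => count_mem x W <= count_mem x S) W).
  case: (minimal_zero_sum_sub minS _ sizeW sumW) => x.
  by have [/leW | /count_memPn->] := boolP (x \in W).
by rewrite -ltnNge; exists x.
Qed.

Lemma minimal_zero_sum_notin0 S : minimal_zero_sum S -> 1 < size S -> 0%R \notin S.
Proof.
move=> minS sizeS; apply/negP => S0.
apply: (minimal_zero_sum_sub minS (U := [:: 0%R])) => //.
- move=> x /=; case: eqP => [<-|_] //=.
  by rewrite -has_pred1 has_count in S0.
- by rewrite sigma_cons /sigma big_nil addr0.
Qed.

Lemma minimal_zero_sum_of_indecomposable S :
  sigma S = 0%R ->
  (forall U V, perm_eq S (U ++ V) -> sigma U = 0%R -> 0 < size U -> 0 < size V -> False) ->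
  minimal_zero_sum S.
Proof.
move=> sumS indec; split=> // m /andP[sizeU sizeUS] sumU.
have [V permS] := perm_to_subseq (mask_subseq m S).
apply: (indec _ V permS sumU sizeU).
by move: sizeUS; rewrite (perm_size permS) size_cat -{1}[size (mask m S)]addn0 ltn_add2l.
Qed.

(* Each part of a zero-sum splitting of the refined sequence is a proper
   zero-sum sequence, so it exceeds S somewhere, necessarily at y or at z. *)
Lemma minimal_zero_sum_split S h y z :
  minimal_zero_sum S -> 1 < size S -> h \in S -> (y + z = h)%R -> y != 0%R -> z != 0%R ->
  (forall U V,
     (forall x, count_mem x U + count_mem x V + (h == x)
                = count_mem x S + (y == x) + (z == x)) ->
     size U + size V = (size S).+1 -> sigma U = 0%R -> sigma V = 0%R ->
     count_mem y S < count_mem y U \/ count_mem z S < count_mem z U ->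
     count_mem y S < count_mem y V \/ count_mem z S < count_mem z V -> False) ->
  minimal_zero_sum (y :: z :: rem h S).
Proof.
move=> minS sizeS hS yz y0 z0 noSplit; set T := y :: z :: rem h S.
have permS := perm_to_rem hS.
have sumT : sigma T = 0%R.
  rewrite !sigma_cons addrA yz -sigma_cons -(sigma_perm permS); by case: minS.
have T0 : 0%R \notin T.
  rewrite !inE !negb_or ![0%R == _]eq_sym y0 z0 /=.
  by apply: contra (minimal_zero_sum_notin0 minS sizeS); apply: mem_rem.
have exceeds_yz W :
    (forall x, count_mem x W <= count_mem x S + (y == x) + (z == x)) ->
    sigma W = 0%R -> 0 < size W < size S ->
    count_mem y S < count_mem y W \/ count_mem z S < count_mem z W.
  move=> leW sumW sizeW; have [x ltx] := minimal_zero_sum_exceeds minS sumW sizeW.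
  move: (leW x) ltx; case: (eqVneq y x) => [-> _|_]; first by left.
  case: (eqVneq z x) => [-> _|_]; first by right.
  by rewrite !addn0 leqNgt => /negP.
apply: minimal_zero_sum_of_indecomposable => // U V permT sumU U0 V0.
have sumV : sigma V = 0%R by move: sumT; rewrite (sigma_perm permT) sigma_cat sumU add0r.
have countUV x : count_mem x U + count_mem x V + (h == x)
                 = count_mem x S + (y == x) + (z == x).
  by rewrite -count_cat -(permP permT) (permP permS) /=; lia.
have sizeUV : size U + size V = (size S).+1.
  by rewrite -size_cat -(perm_size permT) /= size_rem // prednK // ltnW.
have nonsingleton W : {subset W <= T} -> sigma W = 0%R -> 0 < size W -> 1 < size W.
  case: W => [|w [|]] // WT; rewrite sigma_cons /sigma big_nil addr0 => w0 _.
  by case/negP: T0; rewrite -w0; apply/WT/mem_head.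
have U1 : 1 < size U by apply: nonsingleton => // x xU; rewrite (perm_mem permT) mem_cat xU.
have V1 : 1 < size V by apply: nonsingleton => // x xV; rewrite (perm_mem permT) mem_cat xV orbT.
apply: (noSplit U V) => //; apply: exceeds_yz => //.
- by move=> x; rewrite -countUV -addnA leq_addr.
- by apply/andP; split; lia.
- by move=> x; rewrite -countUV addnAC leq_addl.
- by apply/andP; split; lia.
Qed.

Lemma minimal_zero_sum_split_half S g h :
  minimal_zero_sum S -> 1 < size S -> g \in S -> h \in S -> (h + h = g)%R ->
  minimal_zero_sum (h :: h :: rem g S).
Proof.
move=> minS sizeS gS hS hhg.
have h0 : h != 0%R by apply: contraTneq hS => ->; apply: minimal_zero_sum_notin0.
apply: minimal_zero_sum_split => // U V countUV _ _ _ excU excV.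
have := countUV h; rewrite -has_pred1 has_count in hS.
by case: excU excV; case; lia.
Qed.

(* The exchange that keeps g + k g minimal: a part holding an extra k g but no g
   becomes a proper zero-sum subsequence of S once that k g is traded for k
   copies of g. *)
Lemma minimal_zero_sum_exchange_multiple S g h k W W' :
  minimal_zero_sum S -> 0 < k <= count_mem g S -> (g *+ k != g)%R ->
  (forall x, count_mem x W + count_mem x W' + (h == x)
             = count_mem x S + (g == x) + ((g *+ k)%R == x)) ->
  size W + size W' = (size S).+1 -> sigma W' = 0%R ->
  count_mem g S < count_mem g W ->
  count_mem (g *+ k)%R S < count_mem (g *+ k)%R W' -> False.
Proof.
move=> minS /andP[k_gt0 k_le] zg; set z := (g *+ k)%R in zg *.
move=> countWW' sizeWW' sumW' excW excW'.
have zW' : z \in W' by rewrite -has_pred1 has_count; lia.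
have W'g : count_mem g W' = 0.
  by move: (countWW' g); rewrite eqxx (negbTE zg); lia.
apply: (minimal_zero_sum_sub minS (U := rem z W' ++ nseq k g)).
- move=> x; rewrite count_cat count_mem_rem count_nseq.
  have := countWW' x; case: (eqVneq g x) => [<- _|gx].
    by rewrite W'g (negbTE zg) /= eqxx mul1n.
  rewrite /= (negbTE gx); case: (eqVneq z x) => [<-|_]; lia.
- have : count_mem g W <= size W := count_size _ _.
  have : 0 < size W' by case: (W') zW'.
  have -> : size (rem z W' ++ nseq k g) = (size W').-1 + k.
    by rewrite size_cat size_nseq size_rem.
  lia.
- rewrite sigma_cat sigma_nseq -/z.
  by move: sumW'; rewrite (sigma_perm (perm_to_rem zW')) sigma_cons addrC.
Qed.

Lemma minimal_zero_sum_split_multiple S g h k :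
  minimal_zero_sum S -> 1 < size S -> h \in S -> 0 < k <= count_mem g S ->
  (g *+ k != 0)%R -> (g + g *+ k = h)%R ->
  minimal_zero_sum (g :: (g *+ k)%R :: rem h S).
Proof.
move=> minS sizeS hS k_bds z0 gzh; set z := (g *+ k)%R in z0 gzh *.
have gS : g \in S by rewrite -has_pred1 has_count; case/andP: k_bds; lia.
have g0 : g != 0%R by apply: contraTneq gS => ->; apply: minimal_zero_sum_notin0.
apply: minimal_zero_sum_split => // U V countUV sizeUV sumU sumV excU excV.
have countVU x : count_mem x V + count_mem x U + (h == x)
                 = count_mem x S + (g == x) + (z == x) by rewrite (addnC (count_mem x V)).
have [zg|zg] := eqVneq z g.
  by have := countUV g; move: excU excV; rewrite zg eqxx; case; case; lia.
case: excU excV => [excU|excU] [excV|excV].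
- by have := countUV g; lia.
- exact: minimal_zero_sum_exchange_multiple minS k_bds zg countUV sizeUV sumV excU excV.
- apply: minimal_zero_sum_exchange_multiple minS k_bds zg countVU _ sumU excV excU.
  by rewrite addnC.
- by have := countUV z; rewrite (eq_sym g) (negbTE zg) eqxx; lia.
Qed.

End MinimalZeroSum.

Lemma Zp_mulrn_eq0 p (g : 'Z_p) k : prime p -> g != 0%R -> (g *+ k == 0)%R = (p %| k).
Proof.
move=> pr_p g0; have p_gt1 := prime_gt1 pr_p.
have g_unit : g \is a GRing.unit.
  rewrite -(natr_Zp g) unitZpE // prime_coprime // gtnNdvd //.
    by rewrite lt0n; apply: contraNneq g0 => val_g0; apply/eqP/val_inj.
  by rewrite -[p in _ < p](Zp_cast p_gt1) ltn_ord.
rewrite -mulr_natr -{1}(mulr0 g) (inj_eq (mulrI g_unit)) -(inj_eq val_inj) /=.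
by rewrite val_Zp_nat.
Qed.

Section UnsplittableZp.

Variables (p : nat) (S : seq 'Z_p) (g : 'Z_p) (t : nat).
Hypotheses (pr_p : prime p) (unsplS : unsplittable S)
           (t_bounds : 2 <= t <= p - 1) (twice_h : 2 <= count_mem (g *+ t)%R S).

Let h := (g *+ t)%R.

Let minS : minimal_zero_sum S. Proof. by case: unsplS. Qed.

Let hS : h \in S. Proof. by rewrite -has_pred1 has_count /h; lia. Qed.

Let sizeS : 1 < size S.
Proof. by apply: leq_trans twice_h _; apply: count_size. Qed.

Let g0 : g != 0%R.
Proof.
apply: contraTneq hS; rewrite /h => ->; rewrite mul0rn.
exact: minimal_zero_sum_notin0 minS sizeS.
Qed.

Let h_decomp : (g + g *+ (t - 1) = h)%R.
Proof. by rewrite /h -mulrS subn1 prednK //; lia. Qed.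

Let h_neq_g : h != g.
Proof.
apply/eqP => hg; have : (g *+ (t - 1) == 0)%R.
  by rewrite -(inj_eq (addrI g)) h_decomp hg addr0.
by rewrite Zp_mulrn_eq0 // gtnNdvd //; lia.
Qed.

Lemma unsplittable_multiple_gt_count : count_mem g S + 1 < t.
Proof.
rewrite ltnNge; apply/negP => t_le; case: unsplS => _; apply.
exists h, g, (g *+ (t - 1))%R; split=> //.
have k_bounds : 0 < t - 1 <= count_mem g S by apply/andP; split; lia.
apply: minimal_zero_sum_split_multiple => //.
by rewrite Zp_mulrn_eq0 // gtnNdvd //; lia.
Qed.

Lemma unsplittable_multiple_neq_half : g \in S -> t.*2 != p.+1.
Proof.
move=> gS; apply/eqP => tt; case: unsplS => _; apply.
have hh : (h + h = g)%R.
  rewrite /h -mulrnDr addnn tt mulrSr.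
  have /eqP -> : (g *+ p == 0)%R by rewrite Zp_mulrn_eq0.
  by rewrite add0r.
by exists g, h, h; split=> //; apply: minimal_zero_sum_split_half.
Qed.

Lemma unsplittable_multiple_no_short_zero_sum :
  t.*2 < p -> p - t.*2 <= count_mem g S -> (p - t.*2).+2 < size S -> False.
Proof.
move=> t2_lt n_le size_lt.
apply: (minimal_zero_sum_sub minS (U := h :: h :: nseq (p - t.*2) g)).
- move=> x; rewrite /= count_nseq /=.
  case: (eqVneq h x) => [<-|_]; first by rewrite eq_sym (negbTE h_neq_g).
  by case: (eqVneq g x) => [<-|_]; rewrite ?mul1n.
- by rewrite /= size_nseq; lia.
- rewrite !sigma_cons sigma_nseq /h -!mulrnDr.
  by apply/eqP; rewrite Zp_mulrn_eq0 //; apply/dvdnP; exists 1; lia.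
Qed.

Lemma unsplittable_multiple_ge_half :
  155 < p -> size S = (p - 1) %/ 2 -> size S <= count_mem g S + 15 ->
  (p + 3) %/ 2 <= t.
Proof.
move=> p_gt size_eq size_le; rewrite leqNgt; apply/negP => t_lt.
have p_odd : odd p by case: (even_prime pr_p) => // p2; lia.
have t_gt := unsplittable_multiple_gt_count.
have [t2_lt | t2_ge] := ltnP t.*2 p.
  by apply: unsplittable_multiple_no_short_zero_sum; lia.
have gS : g \in S by rewrite -has_pred1 has_count; lia.
by move/eqP: (unsplittable_multiple_neq_half gS); lia.
Qed.

End UnsplittableZp.

Theorem lemma3p2 (p : nat) (pp : prime p) (hp : 155 < p) (S : seq 'Z_p)
    (g : 'Z_p) (r1 r2 r3 r4 t2 t3 t4 : nat) :
  unsplittable S ->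
  size S = (p - 1) %/ 2 ->
  perm_eq S (nseq r1 g ++ nseq r2 (g *+ t2)%R ++ nseq r3 (g *+ t3)%R
             ++ nseq r4 (g *+ t4)%R) ->
  2 <= t2 <= p - 1 -> 2 <= t3 <= p - 1 -> 2 <= t4 <= p - 1 ->
  r2 + r3 + r4 <= 15 ->
  [/\ 2 <= r2 -> (p + 3) %/ 2 <= t2,
      2 <= r3 -> (p + 3) %/ 2 <= t3 &
      2 <= r4 -> (p + 3) %/ 2 <= t4].
Proof.
move=> unsplS sizeS permS t2_bds t3_bds t4_bds r_le.
have count_ge (x : 'Z_p) n s1 s2 : n <= count_mem x (s1 ++ nseq n x ++ s2).
  by rewrite !count_cat count_nseq /= eqxx mul1n addnCA leq_addr.
have countS := permP permS.
have c1 : r1 <= count_mem g S by rewrite countS (count_ge _ _ [::]).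
have c2 : r2 <= count_mem (g *+ t2)%R S by rewrite countS count_ge.
have c3 : r3 <= count_mem (g *+ t3)%R S by rewrite countS (catA (nseq r1 g)) count_ge.
have c4 : r4 <= count_mem (g *+ t4)%R S.
  by rewrite countS !catA -[_ ++ nseq r4 _]cats0 -catA count_ge.
have size_le : size S <= count_mem g S + 15.
  by rewrite (perm_size permS) !size_cat !size_nseq; lia.
have ge_half t r : 2 <= t <= p - 1 -> r <= count_mem (g *+ t)%R S -> 2 <= r ->
    (p + 3) %/ 2 <= t.
  move=> t_bds c_ge r_ge2.
  apply: (unsplittable_multiple_ge_half pp unsplS t_bds (leq_trans r_ge2 c_ge)) => //.
by split; apply: ge_half.
Qed.
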